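(* Let $q=p^{m_0}$ with $p$ prime, let $L$ be a finite extension of $\mathbb{F}_q((1/\theta))$ with ring of integers $\mathcal O$, and let $\rho$ be a permutation of $\{0,1,2,\ldots\}$. Let $f:\mathbb{Z}_p\to\mathcal O$ be continuous with Mahler expansion $f(y)=\sum_{j\ge0}c_j\binom{y}{j}$ (where $c_j\in\mathcal O$, $c_j\to0$). Then $$f^{\rho_1}(y)=\sum_{j\ge0}c_j\binom{y}{\rho_\ast j}.$$
   Context: For $y\in\mathbb{Z}_p$ written $q$-adically as $y=\sum_{j\ge0}c_jq^j$ with $0\le c_j<q$, set $\rho_\ast y:=\sum_{j\ge0}c_jq^{\rho(j)}$; this is a homeomorphism of $\mathbb{Z}_p$ stabilizing the nonnegative integers. Binomial coefficients $\binom{y}{j}$ are viewed as functions $\mathbb{Z}_p\to\mathcal O$ via reduction modulo $p$; every continuous $f:\mathbb{Z}_p\to\mathcal O$ has a unique such (Mahler) expansion with coefficients tending to $0$. Define $f^{\rho_1}(y):=f(\rho_\ast^{-1}y)$. *)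

From mathcomp Require Import all_boot all_order all_algebra.
From mathcomp Require Import reals.

Set Implicit Arguments.
Unset Strict Implicit.
Unset Printing Implicit Defensive.

Import Order.TTheory GRing.Theory Num.Theory.
Local Open Scope ring_scope.

(* The p-adic integers Z_p, modelled as coherent sequences of residues:      *)
(* (y n is the residue of y modulo p^n; this is the inverse limit Z_p.)      *)
Definition is_Zp (p : nat) (y : nat -> nat) : Prop :=
  (forall n, (y n < p ^ n)%N) /\ (forall n, (y n.+1 %% p ^ n)%N = y n).

(* k-th q-adic digit of y in Z_p, where q = p^m0 :  (y mod q^(k+1)) div q^k *)
Definition qdigit (m0 q : nat) (y : nat -> nat) (k : nat) : nat :=
  ((y (m0 * k.+1) %/ q ^ k) %% q)%N.

(* The element sum_k d_k q^k of Z_p (for digits 0 <= d_k < q, q = p^m0). *)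
Definition zp_of_digits (p q : nat) (d : nat -> nat) : nat -> nat :=
  fun n => ((\sum_(k < n) d k * q ^ k) %% p ^ n)%N.

(* rho_* y := sum_j c_j q^(rho j) where y = sum_j c_j q^j; its digit at
   position k is c_(rho^{-1} k).  The permutation rho of nat is given together
   with its inverse rho_inv. *)
Definition rho_star (p m0 q : nat) (rho rho_inv : nat -> nat)
    (y : nat -> nat) : nat -> nat :=
  zp_of_digits p q (fun k => qdigit m0 q y (rho_inv k)).

(* rho_* on a nonnegative integer j (j < q^(j+1), so j+1 digits suffice). *)
Definition rho_star_nat (q : nat) (rho : nat -> nat) (j : nat) : nat :=
  (\sum_(k < j.+1) ((j %/ q ^ k) %% q) * q ^ (rho k))%N.

(* f^{rho_1}(y) := f (rho_*^{-1} y) ; rho_*^{-1} = (rho^{-1})_* . *)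
Definition f_rho1 (L : Type) (p m0 q : nat) (rho rho_inv : nat -> nat)
    (f : (nat -> nat) -> L) (y : nat -> nat) : L :=
  f (rho_star p m0 q rho_inv rho y).

(* binom(y, j) : Z_p -> O via reduction mod p.  The residue of binom(y,j)
   mod p only depends on y mod p^(j+1) (as p^(j+1) > j), so it is the
   residue of the integer binomial 'C(y_(j+1), j) mod p, viewed in L. *)
Definition binomZp (L : nzRingType) (p : nat) (y : nat -> nat) (j : nat) : L :=
  (('C(y j.+1, j) %% p)%N)%:R.

Definition nonarch_abs (R : realType) (L : fieldType) (absv : L -> R) : Prop :=
  [/\ forall x, 0 <= absv x,
      forall x, absv x = 0 <-> x = 0,
      forall x y, absv (x * y) = absv x * absv y &
      forall x y, absv (x + y) <= Num.max (absv x) (absv y)].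

Definition abs_nontrivial (R : realType) (L : fieldType) (absv : L -> R) : Prop :=
  exists x, absv x != 0 /\ absv x != 1.

Definition cauchy_seq (R : realType) (L : fieldType) (absv : L -> R)
    (u : nat -> L) : Prop :=
  forall eps : R, 0 < eps -> exists N, forall m n, (N <= m)%N -> (N <= n)%N ->
    absv (u m - u n) < eps.

Definition seq_to (R : realType) (L : fieldType) (absv : L -> R)
    (u : nat -> L) (l : L) : Prop :=
  forall eps : R, 0 < eps -> exists N, forall n, (N <= n)%N -> absv (l - u n) < eps.

Definition abs_complete (R : realType) (L : fieldType) (absv : L -> R) : Prop :=
  forall u, cauchy_seq absv u -> exists l, seq_to absv u l.

Definition series_to (R : realType) (L : fieldType) (absv : L -> R)
    (a : nat -> L) (s : L) : Prop :=
  seq_to absv (fun n => \sum_(j < n) a j) s.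

Definition Zp_continuous (R : realType) (L : fieldType) (absv : L -> R)
    (p : nat) (f : (nat -> nat) -> L) : Prop :=
  forall y, is_Zp p y -> forall eps : R, 0 < eps -> exists n,
    forall z, is_Zp p z -> z n = y n -> absv (f z - f y) < eps.

Definition mahler_expansion (R : realType) (L : fieldType) (absv : L -> R)
    (p : nat) (f : (nat -> nat) -> L) (c : nat -> L) : Prop :=
  [/\ forall j, absv (c j) <= 1,
      seq_to absv c 0 &
      forall y, is_Zp p y -> series_to absv (fun j => c j * binomZp L p y j) (f y)].

(** The identity holds termwise: for every [j] the residue of [binom(rho_*^{-1} y, j)]
    mod [p] equals that of [binom(y, rho_* j)].  By Lucas' theorem in base [q = p^m0]
    (a consequence of [(X + 1)^(q^k) = X^(q^k) + 1] in characteristic [p]) both are the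
    product over digit positions [k] of [binom(c_k, d_k)], where [c_k] are the [q]-adic
    digits of [y] and [d_k] those of [rho_* j]: permuting the digits of [y] by [rho^{-1}]
    and those of [j] by [rho] just reindexes the product. *)

From mathcomp Require Import all_boot all_order all_algebra.
From mathcomp Require Import reals.
From mathcomp Require Import zify.

Set Implicit Arguments.
Unset Strict Implicit.
Unset Printing Implicit Defensive.

Import Order.TTheory GRing.Theory Num.Theory.
Local Open Scope ring_scope.

Section Lucas.

Variables (p : nat) (L : fieldType).
Hypotheses (p_pr : prime p) (charLp : p \in [pchar L]).

Lemma coef_expXD1 n k : (('X + 1 : {poly L}) ^+ n)`_k = 'C(n, k)%:R.
Proof.
rewrite exprD1n coef_sum.
rewrite (eq_bigr (fun i : 'I_n.+1 => if i == k :> nat then 'C(n, i)%:R else 0));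
  last by move=> i _; rewrite coefMn coefXn eq_sym; case: eqP; rewrite ?mul0rn.
rewrite -big_mkcond (big_ord1_eq _ (fun i => 'C(n, i)%:R : L)).
by case: ltnP => // /bin_small ->.
Qed.

Lemma expXD1_pchar m : ('X + 1 : {poly L}) ^+ (p ^ m) = 'X^(p ^ m) + 1.
Proof.
elim: m => [|m IHm]; first by rewrite !expr1.
rewrite expnSr exprM IHm exprDn_pchar ?expr1n -?exprM //.
by rewrite pnatE // pchar_poly.
Qed.

Lemma coef_expXnD1 Q a i : (0 < Q)%N ->
  (('X^Q + 1 : {poly L}) ^+ a)`_i = if (Q %| i)%N then 'C(a, i %/ Q)%:R else 0.
Proof.
move=> Q_gt0.
have -> : ('X^Q + 1 : {poly L}) ^+ a = ('X + 1) ^+ a \Po 'X^Q.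
  by rewrite rmorphXn /= comp_polyD comp_polyX -polyC1 comp_polyC.
by rewrite coef_comp_poly_Xn // coef_expXD1.
Qed.

Lemma lucas_binomial m a r b s : (r < p ^ m)%N -> (s < p ^ m)%N ->
  'C(a * p ^ m + r, b * p ^ m + s)%:R = 'C(a, b)%:R * 'C(r, s)%:R :> L.
Proof.
set Q := (p ^ m)%N => r_lt s_lt.
have Q_gt0 : (0 < Q)%N by rewrite expn_gt0 prime_gt0.
rewrite -coef_expXD1 exprD (mulnC a) exprM expXD1_pchar -/Q coefMr.
have s_le : (s < (b * Q + s).+1)%N by rewrite ltnS leq_addl.
rewrite (bigD1 (Ordinal s_le)) //= big1 ?addr0; last first.
  move=> [t t_le] /= t_neq_s; rewrite coef_expXD1 coef_expXnD1 //.
  have [t_le_r|/bin_small ->] := leqP t r; last by rewrite mulr0.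
  case: dvdnP => [[k def_k]|]; last by rewrite mul0r.
  (* t <= r < Q and s < Q are congruent modulo Q, hence equal *)
  case/eqP: t_neq_s; apply: val_inj => /=; move: t_le; rewrite ltnS => t_le.
  have [k_lt_b|b_lt_k|k_eq_b] := ltngtP k b.
  - have : (k.+1 * Q <= b * Q)%N by rewrite leq_mul2r k_lt_b orbT.
    rewrite mulSn; lia.
  - have : (b.+1 * Q <= k * Q)%N by rewrite leq_mul2r b_lt_k orbT.
    rewrite mulSn; lia.
  - subst k; lia.
by rewrite coef_expXD1 coef_expXnD1 ?addnK ?dvdn_mull // mulnK.
Qed.

Lemma binomial_modn_expn m a b : (b < p ^ m)%N ->
  'C(a %% p ^ m, b)%:R = 'C(a, b)%:R :> L.
Proof.
move=> b_lt; have pm_gt0 : (0 < p ^ m)%N by rewrite expn_gt0 prime_gt0.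
have := @lucas_binomial m (a %/ p ^ m) _ 0 _ (ltn_pmod a pm_gt0) b_lt.
by rewrite mul0n add0n -divn_eq bin0 mul1r => ->.
Qed.

End Lucas.

Definition digitn (q k a : nat) : nat := (a %/ q ^ k %% q)%N.

Lemma digitn_modn q i K a : (i < K)%N -> digitn q i (a %% q ^ K) = digitn q i a.
Proof.
move=> i_lt; rewrite /digitn !modn_divl -!expnS.
by rewrite modn_dvdm // dvdn_exp2l.
Qed.

Lemma digitn_sum q i K (d : nat -> nat) : (forall k, d k < q)%N -> (i < K)%N ->
  digitn q i (\sum_(k < K) d k * q ^ k) = d i.
Proof.
have sum_recl K' (d' : nat -> nat) : (\sum_(k < K'.+1) d' k * q ^ k
    = d' 0 + (\sum_(k < K') d' k.+1 * q ^ k) * q)%N.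
  rewrite big_ord_recl muln1 big_distrl; congr (_ + _).
  by apply: eq_bigr => k _; rewrite expnS mulnCA mulnC.
elim: i K d => [|i IHi] [|K] d d_lt i_lt //; rewrite /digitn sum_recl addnC.
  by rewrite divn1 modnMDl modn_small.
have q_gt0 : (0 < q)%N by apply: leq_ltn_trans (d_lt 0%N).
rewrite expnS divnMA divnMDl // (divn_small (d_lt 0%N)) addn0.
exact: (IHi K (fun k => d k.+1)).
Qed.

Lemma sum_digits_ltn q M (d : nat -> nat) : (forall k, d k < q)%N ->
  (\sum_(k < M) d k * q ^ k < q ^ M)%N.
Proof.
move=> d_lt; elim: M => [|M IHM]; first by rewrite big_ord0.
rewrite big_ord_recr /= expnS.
have := leq_mul (d_lt M) (leqnn (q ^ M)); rewrite mulSn.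
move: IHM; move: (q ^ M)%N (d M) (\sum_(k < M) d k * q ^ k)%N; lia.
Qed.

Section QadicLucas.

Variables (p m0 : nat) (L : fieldType).
Hypotheses (p_pr : prime p) (charLp : p \in [pchar L]).
Local Notation q := (p ^ m0)%N.

Lemma lucas_binomial_digits K a b : (b < q ^ K)%N ->
  'C(a, b)%:R = \prod_(k < K) 'C(digitn q k a, digitn q k b)%:R :> L.
Proof.
have q_gt0 : (0 < q)%N by rewrite expn_gt0 prime_gt0.
elim: K a b => [|K IHK] a b b_lt.
  by move: b_lt; rewrite expn0 ltnS leqn0 => /eqP ->; rewrite bin0 big_ord0.
rewrite big_ord_recl {1}(divn_eq a q) {1}(divn_eq b q) lucas_binomial ?ltn_pmod //.
rewrite IHK; last by rewrite ltn_divLR // -expnSr.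
rewrite /digitn expn0 !divn1 mulrC; congr (_ * _).
by apply: eq_bigr => k _; rewrite lift0 expnS !divnMA.
Qed.

End QadicLucas.

Lemma big_ord_reindex_perm (R : Type) (idx : R) (op : Monoid.com_law idx)
    (F : nat -> nat -> R) (g rho rho_inv : nat -> nat) M J :
  cancel rho rho_inv -> cancel rho_inv rho -> (forall i, F i 0%N = idx) ->
  (forall k, (k < J)%N -> (rho k < M)%N) ->
  \big[op/idx]_(i < M) F i (if (rho_inv i < J)%N then g (rho_inv i) else 0%N)
  = \big[op/idx]_(k < J) F (rho k) (g k).
Proof.
move=> rhoK rho_invK F0; elim: J => [|J IHJ] rho_lt.
  by rewrite big_ord0 big1 // => i _; rewrite ltn0.
rewrite big_ord_recr /= -IHJ; last by move=> k /ltnW; apply: rho_lt.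
rewrite (eq_bigr (fun i : 'I_M =>
    op (F i (if (rho_inv i < J)%N then g (rho_inv i) else 0%N))
       (if i == rho J :> nat then F i (g J) else idx))); last first.
  move=> i _; have [->|i_neq] := eqVneq (i : nat) (rho J).
    by rewrite rhoK ltnn ltnSn F0 Monoid.mul1m.
  have : rho_inv i != J by apply: contraNneq i_neq => <-; rewrite rho_invK.
  by rewrite ltnS leq_eqVlt => /negbTE ->; rewrite Monoid.mulm1.
by rewrite big_split /= -big_mkcond (big_ord1_eq _ (fun i => F i (g J))) rho_lt.
Qed.

Lemma Zp_modn_expn p y n K : is_Zp p y -> (n <= K)%N -> (y K %% p ^ n)%N = y n.
Proof.
move=> [y_lt y_coh]; elim: K => [|K IHK] n_le.
  by move: n_le; rewrite leqn0 => /eqP ->; rewrite modn_small.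
rewrite leq_eqVlt ltnS in n_le; case/orP: n_le => [/eqP ->|n_le].
  by rewrite modn_small.
by rewrite -(modn_dvdm _ (dvdn_exp2l p n_le)) y_coh IHK.
Qed.

Lemma eq_series_to (R : realType) (L : fieldType) (absv : L -> R) a b s :
  a =1 b -> series_to absv a s -> series_to absv b s.
Proof.
move=> eq_ab a_to eps eps_gt0; have [N N_to] := a_to eps eps_gt0.
by exists N => n /N_to; under eq_bigr do rewrite eq_ab.
Qed.

Section RhoStar.

Variables (p m0 : nat) (L : fieldType).
Hypotheses (p_pr : prime p) (m0_gt0 : (0 < m0)%N) (charLp : p \in [pchar L]).
Local Notation q := (p ^ m0)%N.

Lemma q_gt1 : (1 < q)%N.
Proof. by rewrite -(expn0 p) ltn_exp2l ?prime_gt1. Qed.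

Lemma zp_of_digits_Zp d : is_Zp p (zp_of_digits p q d).
Proof.
split => n; first by rewrite ltn_pmod // expn_gt0 prime_gt0.
rewrite /zp_of_digits (modn_dvdm _ (dvdn_exp2l p (leqnSn n))) big_ord_recr /=.
have n_le : (n <= m0 * n)%N by rewrite leq_pmull.
by rewrite -expnM -(subnK n_le) expnD mulnA addnC modnMDl.
Qed.

Lemma qdigit_Zp y k K : is_Zp p y -> (m0 * k.+1 <= K)%N ->
  qdigit m0 q y k = digitn q k (y K).
Proof.
move=> y_Zp le_K; rewrite /qdigit -(Zp_modn_expn y_Zp le_K) expnM.
by rewrite -/(digitn q k _) digitn_modn.
Qed.

Lemma qdigit_zp_of_digits d i : (forall k, d k < q)%N ->
  qdigit m0 q (zp_of_digits p q d) i = d i.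
Proof.
move=> d_lt; rewrite /qdigit /zp_of_digits expnM -/(digitn q i _) digitn_modn //.
by rewrite digitn_sum // (leq_trans (ltnSn i)) // leq_pmull.
Qed.

Lemma binomZp_digits y b M : is_Zp p y -> (b < q ^ M)%N ->
  binomZp L p y b = \prod_(i < M) 'C(qdigit m0 q y i, digitn q i b)%:R.
Proof.
move=> y_Zp b_lt.
rewrite /binomZp (GRing.natr_mod_pchar charLp).
rewrite -(Zp_modn_expn y_Zp (leq_addr (m0 * M) b.+1)).
rewrite (binomial_modn_expn p_pr charLp); last first.
  exact: ltn_trans (ltnSn b) (ltn_expl _ (prime_gt1 p_pr)).
rewrite (lucas_binomial_digits p_pr charLp _ b_lt).
apply: eq_bigr => i _; rewrite (qdigit_Zp (K := (b.+1 + m0 * M)%N) y_Zp) //.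
by apply: leq_trans (leq_addl _ _); rewrite leq_mul2l ltn_ord orbT.
Qed.

Variables rho rho_inv : nat -> nat.
Hypotheses (rhoK : cancel rho rho_inv) (rho_invK : cancel rho_inv rho).

Lemma binomZp_rho_star y j : is_Zp p y ->
  binomZp L p (rho_star p m0 q rho_inv rho y) j = binomZp L p y (rho_star_nat q rho j).
Proof.
move=> y_Zp; have qdigit_lt i : (qdigit m0 q y i < q)%N.
  by rewrite ltn_pmod // expn_gt0 prime_gt0.
have j_lt : (j < q ^ j.+1)%N by exact: ltn_trans (ltnSn j) (ltn_expl _ q_gt1).
rewrite (binomZp_digits (zp_of_digits_Zp _) j_lt).
under eq_bigr do rewrite qdigit_zp_of_digits //.
(* [e] lists the [q]-adic digits of [rho_* j]; they vanish from position [M] on *)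
set M := (\sum_(k < j.+1) (rho k).+1)%N.
have rho_lt k : (k < j.+1)%N -> (rho k < M)%N.
  by move=> k_lt; rewrite /M (bigD1 (Ordinal k_lt)) //=; lia.
set e := fun i => if (rho_inv i < j.+1)%N then digitn q (rho_inv i) j else 0%N.
have e_lt i : (e i < q)%N.
  by rewrite /e; case: ifP => _; rewrite ?ltn_pmod ?expn_gt0 ?prime_gt0.
have rho_star_nat_digits : rho_star_nat q rho j = (\sum_(i < M) e i * q ^ i)%N.
  by rewrite (@big_ord_reindex_perm _ _ _ (fun i x => x * q ^ i)%N
    (fun k => digitn q k j) _ _ _ _ rhoK rho_invK (fun i => mul0n _) rho_lt).
rewrite (binomZp_digits y_Zp (_ : _ < q ^ M)%N); last first.
  by rewrite rho_star_nat_digits sum_digits_ltn.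
transitivity (\prod_(i < M) 'C(qdigit m0 q y i, e i)%:R : L).
  exact: esym (@big_ord_reindex_perm _ _ _ (fun i x => 'C(qdigit m0 q y i, x)%:R : L)
    (fun k => digitn q k j) _ _ _ _ rhoK rho_invK (fun i => congr1 _ (bin0 _)) rho_lt).
by apply: eq_bigr => i _; rewrite rho_star_nat_digits digitn_sum.
Qed.

End RhoStar.

Theorem corollary7p4
  (p m0 q : nat) (hp : prime p) (hm0 : (0 < m0)%N) (hq : q = (p ^ m0)%N)
  (R : realType) (L : fieldType) (absv : L -> R)
  (hchar : p \in [pchar L])
  (habs : nonarch_abs absv) (hnt : abs_nontrivial absv)
  (hcomp : abs_complete absv)
  (rho rho_inv : nat -> nat)
  (hrho1 : cancel rho rho_inv) (hrho2 : cancel rho_inv rho)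
  (f : (nat -> nat) -> L)
  (hfO : forall y, is_Zp p y -> absv (f y) <= 1)
  (hfc : Zp_continuous absv p f)
  (c : nat -> L) (hmahler : mahler_expansion absv p f c) :
  forall y, is_Zp p y ->
    series_to absv
      (fun j => c j * binomZp L p y (rho_star_nat q rho j))
      (f_rho1 p m0 q rho rho_inv f y).
Proof.
move=> y y_Zp; subst q; case: hmahler => _ _ f_mahler.
set z := rho_star p m0 (p ^ m0) rho_inv rho y.
apply: (eq_series_to (a := fun j => c j * binomZp L p z j)).
  by move=> j /=; rewrite (binomZp_rho_star hp hm0 hchar hrho1 hrho2 _ y_Zp).
exact/f_mahler/zp_of_digits_Zp.
Qed.
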